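(* Let $K$ be a field of characteristic zero and let $D$ be a simple digraph with vertex set $\{v_1,\dots,v_n\}$ and edge set $\{e_1,\dots,e_m\}$. Let $I(D,E)$ be the ideal of $K[e_1,\dots,e_m,v_1,\dots,v_n,z_1,\dots,z_n]$ generated by the binomials $e_h-z_iv_j$ for every edge $e_h=[v_i,v_j]$ of $D$, together with $z_iv_i-1$ for $i=1,\dots,n$, and let $I(E)_D=I(D,E)\cap K[e_1,\dots,e_m]$. Then $I(E)_D$ is generated by the binomials $f_C$, where $C$ ranges over the cycles of $D$.
   Context: $[v_i,v_j]$ denotes the directed edge from $v_i$ to $v_j$. A cycle of $D$ is a sequence of distinct vertices $v_{i(1)},\dots,v_{i(q)}$ ($q\ge 2$) together with distinct edges $e_{h_1},\dots,e_{h_q}$ of $D$ such that, setting $v_{i(q+1)}=v_{i(1)}$, each $e_{h_k}$ is either $[v_{i(k)},v_{i(k+1)}]$ or $[v_{i(k+1)},v_{i(k)}]$ (i.e. a cycle of the underlying undirected graph, edge directions ignored). It is a directed cycle if $e_{h_k}=[v_{i(k)},v_{i(k+1)}]$ for all $k$. For such a cycle, traversed in the given order, let $I$ be the set of indices $h_k$ with $e_{h_k}=[v_{i(k)},v_{i(k+1)}]$ (edges traversed along their direction) and $J$ the set of the remaining indices; then $f_C=\prod_{h\in I}e_h-\prod_{h\in J}e_h$ (an empty product equals $1$; so for a directed cycle $f_C=\prod_{h\in I}e_h-1$). Equivalently, $I(E)_D$ is the toric ideal, i.e. the kernel of the $K$-algebra map $K[e_1,\dots,e_m]\to K[v_1^{\pm1},\dots,v_n^{\pm1}]$,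 $e_h\mapsto v_jv_i^{-1}$ for $e_h=[v_i,v_j]$. *)

From HB Require Import structures.
From mathcomp Require Import all_boot all_order all_algebra.
From mathcomp Require Import mpoly.
Set Implicit Arguments. Unset Strict Implicit. Unset Printing Implicit Defensive.
Import GRing.Theory.
Local Open Scope ring_scope.

Definition ideal_gen (R : comPzRingType) (S : R -> Prop) (f : R) : Prop :=
  exists (gs cs : seq R), [/\ size cs = size gs, (forall g, g \in gs -> S g) &
     f = \sum_(k < size gs) cs`_k * gs`_k].

(* A simple digraph on vertices 'I_n with edges e_h (h : 'I_m):
   edge h is [v_(tl h), v_(hd h)] = (edge h).1 -> (edge h).2;
   no loops, no multiple (parallel, same-direction) edges. *)
Definition simple_digraph (n m : nat) (edge : 'I_m -> 'I_n * 'I_n) : Prop :=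
  injective edge /\ (forall h, (edge h).1 != (edge h).2).

Definition is_cycle (n m : nat) (edge : 'I_m -> 'I_n * 'I_n)
    (vs : seq 'I_n) (es : seq 'I_m) : Prop :=
  [/\ (2 <= size vs)%N, size es = size vs, uniq vs, uniq es &
    forall k, (k < size vs)%N -> forall (v0 : 'I_n) (e0 : 'I_m),
      let a := nth v0 vs k in
      let b := nth v0 vs ((k.+1) %% size vs) in
      let e := nth e0 es k in
      edge e = (a, b) \/ edge e = (b, a)].

Definition cycle_fwd (n m : nat) (edge : 'I_m -> 'I_n * 'I_n)
    (vs : seq 'I_n) (es : seq 'I_m) (k : nat) : bool :=
  match vs, es with
  | v0 :: _, e0 :: _ =>
      edge (nth e0 es k) == (nth v0 vs k, nth v0 vs (k.+1 %% size vs))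
  | _, _ => false
  end.

Definition f_cycle (K : fieldType) (n m : nat) (edge : 'I_m -> 'I_n * 'I_n)
    (vs : seq 'I_n) (es : seq 'I_m) : {mpoly K[m]} :=
  match es with
  | e0 :: _ =>
     \prod_(k < size es | cycle_fwd edge vs es k) 'X_(nth e0 es k)
   - \prod_(k < size es | ~~ cycle_fwd edge vs es k) 'X_(nth e0 es k)
  | [::] => 0
  end.

Definition evar (n m : nat) (h : 'I_m) : 'I_(m + n + n) := lshift n (lshift n h).
Definition vvar (n m : nat) (i : 'I_n) : 'I_(m + n + n) := lshift n (rshift m i).
Definition zvar (n m : nat) (i : 'I_n) : 'I_(m + n + n) := rshift (m + n) i.

Definition IDE_gens (K : fieldType) (n m : nat) (edge : 'I_m -> 'I_n * 'I_n)
    (g : {mpoly K[m + n + n]}) : Prop :=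
  (exists h : 'I_m,
     g = 'X_(evar n h) - 'X_(zvar m (edge h).1) * 'X_(vvar m (edge h).2))
  \/ (exists i : 'I_n, g = 'X_(zvar m i) * 'X_(vvar m i) - 1).

Definition embE (K : fieldType) (n m : nat) (p : {mpoly K[m]})
    : {mpoly K[m + n + n]} :=
  mmap (@mpolyC (m + n + n) K) (fun h => 'X_(evar n h)) p.

(* I(E)_D = I(D,E) ∩ K[e_1..e_m], viewed inside K[e_1..e_m]. *)
Definition IED (K : fieldType) (n m : nat) (edge : 'I_m -> 'I_n * 'I_n)
    (f : {mpoly K[m]}) : Prop :=
  ideal_gen (IDE_gens edge) (embE n f).

Definition cycle_binomials (K : fieldType) (n m : nat)
    (edge : 'I_m -> 'I_n * 'I_n) (f : {mpoly K[m]}) : Prop :=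
  exists vs es, is_cycle edge vs es /\ f = f_cycle K edge vs es.

From HB Require Import structures.
From mathcomp Require Import all_boot all_order all_algebra.
From mathcomp Require Import mpoly.
From mathcomp Require Import ring zify.
Set Implicit Arguments. Unset Strict Implicit. Unset Printing Implicit Defensive.
Import GRing.Theory.
Local Open Scope ring_scope.

(* Grade K[e,v,z] by Z^n, giving e_h = [v_i,v_j] the weight
   u_j - u_i, v_i the weight u_i and z_i the weight -u_i.  The generators of
   I(D,E) are binomials of weight-homogeneous monomials, so for every weight c
   the sum of the coefficients of weight c vanishes on I(D,E); restricted to
   K[e] this says that I(E)_D is spanned by the binomials e^a - e^b with a and b
   of equal weight.  Conversely such binomials lie in I(D,E): modulo I(D,E),
   e^a is congruent to z^(out a) v^(in a) and z_i v_i to 1.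
   A binomial e^a - e^b of equal weights lies in the ideal of the f_C by
   induction on its degree.  A common variable can be factored out.  Otherwise
   orient the edges of the support of a forwards and those of b backwards;
   equal weights mean that every vertex has as many incoming as outgoing arcs,
   so following outgoing arcs closes a cycle C of D with
   f_C = e^(C+) - e^(C-), C+ <= a, C- <= b, and
   e^a - e^b = e^(a-C+) f_C + e^(C-) (e^(a-C+) - e^(b-C-)). *)

Lemma big_ordS (R : Type) (idx : R) (op : Monoid.com_law idx) q (F : nat -> R) :
  \big[op/idx]_(k < q) F (k.+1 %% q)%N = \big[op/idx]_(k < q) F k.
Proof. by rewrite [RHS](reindex_inj (@ordS_inj q)). Qed.

Lemma prodrX_fiber (R : comPzSemiRingType) (I J : finType) (t : I -> J)
    (x : J -> R) (e : I -> nat) :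
  \prod_j x j ^+ (\sum_i e i * (t i == j)) = \prod_i x (t i) ^+ e i.
Proof.
under eq_bigr do rewrite -prodrXr.
rewrite exchange_big /=; apply: eq_bigr => i _.
rewrite (bigD1 (t i)) //= eqxx muln1 big1 ?mulr1 // => j /negbTE tj.
by rewrite eq_sym tj muln0 expr0.
Qed.

Lemma fcycle_nth (T : eqType) (f : T -> T) (c : seq T) x0 k :
  fcycle f c -> (k < size c)%N -> nth x0 c (k.+1 %% size c) = f (nth x0 c k).
Proof.
rewrite (cycle_path x0) => /pathP c_path lt_kc; apply/esym/eqP.
have [lt_k1c | ] := ltnP k.+1 (size c).
  by rewrite modn_small //; exact: (c_path x0 k.+1 lt_k1c).
rewrite leq_eqVlt ltnNge lt_kc orbF => /eqP k1c.
have -> : nth x0 c k = last x0 c by rewrite -nth_last k1c.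
by rewrite -k1c modnn; apply: (c_path x0 0); rewrite k1c.
Qed.

Lemma fcycle_exists (T : finType) (f : T -> T) (P : pred T) x :
  P x -> {homo f : u / P u} ->
  exists c, [/\ c != [::], uniq c, fcycle f c & {subset c <= P}].
Proof.
move=> Px fP; have /trajectP [i lt_i iter_i] := looping_order f x.
set y := iter i f x.
have Piter j z : P z -> P (iter j f z) by elim: j => //= j IH /IH /fP.
exists (orbit f y); split.
- by rewrite -size_eq0 size_orbit -lt0n order_gt0.
- exact: orbit_uniq.
- apply/(orbitPcycle 0 3); exists (order f x - i.+1)%N.
  by rewrite subnSK // /y -iterD subnK ?iter_i // ltnW.
- by move=> _ /trajectP [j _ ->]; apply/Piter/Piter.
Qed.

Lemma bigID_eqb (R : Type) (idx : R) (op : Monoid.com_law idx) (I : finType)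
    (P : pred I) (F : I -> R) :
  op (\big[op/idx]_(i | P i == true) F i) (\big[op/idx]_(i | P i == false) F i) =
  \big[op/idx]_i F i.
Proof.
rewrite [RHS](bigID P); congr (op _ _); apply: eq_bigl => i; [exact: eqb_id | exact: eqbF_neg].
Qed.

Section IdealGen.
Variables (R : comPzRingType) (S : R -> Prop).

Lemma ideal_genP f : ideal_gen S f <->
  exists l : seq (R * R), (forall p, p \in l -> S p.2) /\ f = \sum_(p <- l) p.1 * p.2.
Proof.
split=> [[gs [cs [size_cs Sgs ->]]] | [l [Sl ->]]].
  exists (zip cs gs); split.
    move=> p l_p; apply: Sgs; rewrite -(@unzip2_zip _ _ cs gs) ?size_cs //.
    exact: map_f.
  rewrite (big_nth (0, 0)) big_mkord size_zip size_cs minnn.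
  by apply: eq_bigr => k _; rewrite nth_zip.
exists (unzip2 l), (unzip1 l); split; first by rewrite !size_map.
  by move=> g /mapP [p /Sl Sp ->].
rewrite (big_nth (0, 0)) big_mkord size_map.
by apply: eq_bigr => k _; rewrite !(nth_map (0, 0)).
Qed.

Lemma ideal_gen0 : ideal_gen S 0.
Proof. by apply/ideal_genP; exists [::]; rewrite big_nil. Qed.

Lemma ideal_gen_mem g : S g -> ideal_gen S g.
Proof.
move=> Sg; apply/ideal_genP; exists [:: (1, g)].
by rewrite big_seq1 mul1r; split=> // p; rewrite inE => /eqP ->.
Qed.

Lemma ideal_genD f g : ideal_gen S f -> ideal_gen S g -> ideal_gen S (f + g).
Proof.
move=> /ideal_genP [l1 [Sl1 ->]] /ideal_genP [l2 [Sl2 ->]].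
apply/ideal_genP; exists (l1 ++ l2); rewrite big_cat; split=> // p.
by rewrite mem_cat => /orP [/Sl1 | /Sl2].
Qed.

Lemma ideal_genMl c f : ideal_gen S f -> ideal_gen S (c * f).
Proof.
move=> /ideal_genP [l [Sl ->]]; apply/ideal_genP.
exists [seq (c * p.1, p.2) | p <- l]; split; first by move=> _ /mapP [p /Sl Sp ->].
by rewrite big_map mulr_sumr; apply: eq_bigr => p _; rewrite mulrA.
Qed.

Lemma ideal_gen_sum (I : Type) (r : seq I) (P : pred I) (F : I -> R) :
  (forall i, P i -> ideal_gen S (F i)) -> ideal_gen S (\sum_(i <- r | P i) F i).
Proof.
by move=> IF; elim/big_rec: _ => [|i x Pi Ix]; [apply: ideal_gen0 | apply/ideal_genD/Ix/IF].
Qed.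

Definition eqmod x y := ideal_gen S (x - y).

Lemma eqmod_refl x : eqmod x x.
Proof. by rewrite /eqmod subrr; apply: ideal_gen0. Qed.

Lemma eqmod_sym x y : eqmod x y -> eqmod y x.
Proof. by move=> Ixy; rewrite /eqmod -opprB -mulN1r; apply: ideal_genMl. Qed.

Lemma eqmod_trans y x z : eqmod x y -> eqmod y z -> eqmod x z.
Proof. by move=> Ixy Iyz; rewrite /eqmod -(subrK y x) -addrA; apply: ideal_genD. Qed.

Lemma eqmodM x1 y1 x2 y2 : eqmod x1 y1 -> eqmod x2 y2 -> eqmod (x1 * x2) (y1 * y2).
Proof.
rewrite /eqmod => I1 I2; have -> : x1 * x2 - y1 * y2 = x1 * (x2 - y2) + y2 * (x1 - y1) by ring.
by apply: ideal_genD; apply: ideal_genMl.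
Qed.

Lemma eqmod_prod (I : Type) (r : seq I) (P : pred I) (F G : I -> R) :
  (forall i, P i -> eqmod (F i) (G i)) ->
  eqmod (\prod_(i <- r | P i) F i) (\prod_(i <- r | P i) G i).
Proof. by move=> FG; apply: (big_ind2 eqmod) => //; [apply: eqmod_refl | apply: eqmodM]. Qed.

Lemma eqmodX x y j : eqmod x y -> eqmod (x ^+ j) (y ^+ j).
Proof.
by move=> xy; elim: j => [|j IH]; rewrite ?expr0 ?exprS; [apply: eqmod_refl | apply: eqmodM].
Qed.

End IdealGen.

Lemma ideal_gen_rmorph (R R' : comPzRingType) (phi : {rmorphism R -> R'})
    (S : R -> Prop) (T : R' -> Prop) f :
  (forall g, S g -> ideal_gen T (phi g)) -> ideal_gen S f -> ideal_gen T (phi f).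
Proof.
move=> ST /ideal_genP [l [Sl ->]]; rewrite rmorph_sum big_seq.
by apply: ideal_gen_sum => p /Sl Sp; rewrite rmorphM; apply/ideal_genMl/ST.
Qed.

Lemma ideal_gen_trans (R : comPzRingType) (S T : R -> Prop) f :
  (forall g, S g -> ideal_gen T g) -> ideal_gen S f -> ideal_gen T f.
Proof. exact: (@ideal_gen_rmorph R R idfun). Qed.

Lemma sum_mnm1_le (k : nat) (s : seq 'I_k) x0 (P : pred 'I_(size s)) (a : 'X_{1..k}) :
  uniq s -> (forall i, P i -> 0 < a (nth x0 s i))%N ->
  (\sum_(i < size s | P i) U_(nth x0 s i) <= a)%MM.
Proof.
move=> s_uniq pos; apply/mnm_lepP => h; rewrite mnm_sumE.
under eq_bigr do rewrite mnm1E.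
have [a0 | a_pos] := posnP (a h).
  rewrite big1 // => i Pi; apply/eqP; rewrite eqb0.
  by apply: contraTN (pos i Pi) => /eqP ->; rewrite a0.
apply: leq_trans a_pos; apply: (@leq_trans (\sum_(i < size s) (nth x0 s i == h))).
  by rewrite [X in (_ <= X)%N](bigID P) leq_addr.
rewrite -(big_mkord xpredT (fun i => (nth x0 s i == h) : nat)).
rewrite -(big_nth x0 xpredT (fun y => (y == h) : nat)).
have -> : (\sum_(y <- s) (y == h) = count_mem h s)%N.
  by elim: (s) => [|y t IH]; rewrite ?big_nil ?big_cons //= IH.
by rewrite count_uniq_mem ?leq_b1.
Qed.

Section Grading.
Variables (R : comNzRingType) (G : zmodType) (k : nat) (wt : 'I_k -> G).
Implicit Types (mu nu : 'X_{1..k}) (p : {mpoly R[k]}) (c : G).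

Definition mweight mu : G := \sum_i wt i *+ mu i.

Lemma mweight0 : mweight 0%MM = 0.
Proof. by rewrite /mweight big1 // => i _; rewrite mnm0E. Qed.

Lemma mweightD mu nu : mweight (mu + nu)%MM = mweight mu + mweight nu.
Proof. by rewrite /mweight -big_split; apply: eq_bigr => i _; rewrite mnmDE mulrnDr. Qed.

Lemma mweightU i : mweight U_(i)%MM = wt i.
Proof.
rewrite /mweight (bigD1 i) //= mnm1E eqxx big1 ?addr0 // => j /negbTE ji.
by rewrite mnm1E eq_sym ji.
Qed.

Lemma mweight_sum (I : Type) (r : seq I) (P : pred I) (F : I -> 'X_{1..k}) :
  mweight (\sum_(i <- r | P i) F i)%MM = \sum_(i <- r | P i) mweight (F i).
Proof. exact: (big_morph mweight mweightD mweight0). Qed.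

Lemma mweightMn mu j : mweight (mu *+ j)%MM = mweight mu *+ j.
Proof. by elim: j => [|j IH]; rewrite ?mulm0n ?mweight0 // mulmS mweightD IH mulrS. Qed.

Definition homog_binomial p : Prop :=
  exists mu nu, mweight mu = mweight nu /\ p = 'X_[mu] - 'X_[nu].

Definition wcoeff c p : R := \sum_(mu <- msupp p | mweight mu == c) p@_mu.

Lemma wcoeffE c p s : uniq s -> {subset msupp p <= s} ->
  wcoeff c p = \sum_(mu <- s | mweight mu == c) p@_mu.
Proof.
move=> s_uniq supp_s; apply: perm_big_supp; apply: uniq_perm; rewrite ?filter_uniq //.
by move=> mu; rewrite !mem_filter -mcoeff_msupp; case: (boolP (_ \in _)) => // /supp_s ->.
Qed.

Lemma wcoeff_is_zmod_morphism c : zmod_morphism (wcoeff c).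
Proof.
move=> p q; set s := undup (msupp p ++ msupp q).
have s_uniq : uniq s := undup_uniq _.
have sub_s r : {subset msupp r <= msupp p ++ msupp q} -> {subset msupp r <= s}.
  by move=> sub mu /sub; rewrite mem_undup.
have sub_p : {subset msupp p <= s} by apply: sub_s => mu; rewrite mem_cat => ->.
have sub_q : {subset msupp q <= s} by apply: sub_s => mu; rewrite mem_cat orbC => ->.
have sub_pq : {subset msupp (p - q) <= s}.
  by apply: sub_s => mu /msuppD_le; rewrite !mem_cat (perm_mem (msuppN q)).
rewrite !(@wcoeffE c _ s) // -sumrB.
by apply: eq_bigr => mu _; rewrite mcoeffB.
Qed.

HB.instance Definition _ c :=
  GRing.isZmodMorphism.Build {mpoly R[k]} R (wcoeff c) (wcoeff_is_zmod_morphism c).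

Lemma wcoeffZX c a mu : wcoeff c (a *: 'X_[mu]) = a * (mweight mu == c)%:R.
Proof.
rewrite (@wcoeffE c _ [:: mu]) //; last first.
  move=> nu; rewrite mcoeff_msupp mcoeffZ mcoeffX inE eq_sym.
  by have [|_] := eqVneq nu mu; rewrite ?mulr0 ?eqxx.
rewrite big_mkcond big_seq1 mcoeffZ mcoeffX eqxx mulr1.
by case: eqP; rewrite ?mulr1 ?mulr0.
Qed.

Lemma wcoeffMX c p mu : wcoeff c (p * 'X_[mu]) = wcoeff (c - mweight mu) p.
Proof.
rewrite /wcoeff (perm_big _ (msuppMX p mu)) big_map; apply: eq_big => nu.
  rewrite mweightD; apply/eqP/eqP => [<- | ->].
    by rewrite [_ + mweight nu]addrC addrK.
  by rewrite addrC subrK.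
by move=> _; rewrite mcoeffMX.
Qed.

Lemma wcoeff_ideal (S : {mpoly R[k]} -> Prop) c p :
  (forall g, S g -> homog_binomial g) -> ideal_gen S p -> wcoeff c p = 0.
Proof.
move=> S_homog /ideal_genP [l [Sl ->]]; rewrite raddf_sum big_seq big1 // => q.
by move=> /Sl/S_homog [mu [nu [mu_nu ->]]]; rewrite mulrBr raddfB /= !wcoeffMX mu_nu subrr.
Qed.

Lemma homog_ideal_wcoeff p :
  (forall c, wcoeff c p = 0) -> ideal_gen homog_binomial p.
Proof.
move=> p0; set s := msupp p.
(* Replace every monomial by a representative of its weight class: the
   replacement sum is zero because all the wcoeff of p are. *)
pose rep mu := nth mu s (find (fun nu => mweight nu == mweight mu) s).
have rep_wt mu : mweight (rep mu) = mweight mu.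
  have [has_mu | no_mu] := boolP (has (fun nu => mweight nu == mweight mu) s).
    exact/eqP/(nth_find mu has_mu).
  by rewrite /rep (hasNfind no_mu) nth_default.
have rep_eq mu nu : nu \in s -> (rep mu == rep nu) = (mweight mu == mweight nu).
  move=> nu_s; apply/eqP/eqP => [rep_mu_nu | wt_mu_nu].
    by rewrite -rep_wt rep_mu_nu rep_wt.
  rewrite /rep wt_mu_nu; apply: set_nth_default; rewrite -has_find.
  by apply/hasP; exists nu.
have rep0 : \sum_(mu <- s) p@_mu *: 'X_[rep mu] = 0.
  apply/mpolyP => nu; rewrite mcoeff0 raddf_sum /=.
  under eq_bigr do rewrite mcoeffZ mcoeffX.
  have [/hasP [mu0 mu0_s /eqP <-] | no_rep] := boolP (has (fun mu => rep mu == nu) s).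
    apply: etrans (p0 (mweight mu0)); rewrite /wcoeff -/s [RHS]big_mkcond !big_seq.
    by apply: eq_bigr => mu _; rewrite rep_eq //; case: eqP; rewrite ?mulr1 ?mulr0.
  rewrite big_seq big1 // => mu mu_s.
  by rewrite (negbTE (hasPn no_rep mu mu_s)) mulr0.
rewrite (mpolyE p) -/s -[X in ideal_gen _ X]subr0 -{2}rep0 -sumrB.
apply: ideal_gen_sum => mu _; rewrite -scalerBr -mul_mpolyC.
by apply/ideal_genMl/ideal_gen_mem; exists mu, (rep mu).
Qed.

Lemma homog_binomial_ideal (S : {mpoly R[k]} -> Prop) :
  (forall mu nu, mweight mu = mweight nu -> mu != nu ->
     exists mu' nu', [/\ (mu' <= mu)%MM, (nu' <= nu)%MM, mweight mu' = mweight nu',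
       (0 < mdeg (mu' + nu'))%N & ideal_gen S ('X_[mu'] - 'X_[nu'])]) ->
  forall mu nu, mweight mu = mweight nu -> ideal_gen S ('X_[mu] - 'X_[nu]).
Proof.
move=> step; suff ind d mu nu : (mdeg mu + mdeg nu < d)%N -> mweight mu = mweight nu ->
    ideal_gen S ('X_[mu] - 'X_[nu]).
  by move=> mu nu; apply: (ind (mdeg mu + mdeg nu).+1).
elim: d mu nu => [//|d IH] mu nu lt_d wt_mu_nu.
have [<-|mu_nu] := eqVneq mu nu; first by rewrite subrr; apply: ideal_gen0.
have [mu' [nu' [le_mu le_nu wt' deg' Ig']]] := step mu nu wt_mu_nu mu_nu.
move: lt_d wt_mu_nu; rewrite -(submK le_mu) -(submK le_nu) !mdegD !mweightD wt'.
rewrite mdegD in deg' => lt_d /addIr wt_rest.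
rewrite !mpolyXD; set x := 'X_[mu - mu']; set y := 'X_[nu - nu'].
have -> : x * 'X_[mu'] - y * 'X_[nu'] = x * ('X_[mu'] - 'X_[nu']) + 'X_[nu'] * (x - y) by ring.
by apply: ideal_genD; apply: ideal_genMl => //; apply: IH => //; lia.
Qed.

End Grading.

Lemma wcoeff_mmap (R : comNzRingType) (G : zmodType) (k l : nat)
    (wt : 'I_k -> G) (wt' : 'I_l -> G) (r : 'I_k -> 'I_l) c (p : {mpoly R[k]}) :
  (forall i, wt' (r i) = wt i) ->
  wcoeff wt' c (mmap (@mpolyC l R) (fun i => 'X_(r i)) p) = wcoeff wt c p.
Proof.
move=> wt_r; rewrite /mmap /mmap1 [in RHS](mpolyE p) !raddf_sum /=.
apply: eq_bigr => mu _; rewrite mprodXnE mul_mpolyC !wcoeffZX.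
rewrite mweight_sum; congr (_ * (_ == _)%:R); apply: eq_bigr => i _.
by rewrite mweightMn mweightU wt_r.
Qed.

Section Digraph.
Variables (n m : nat) (edge : 'I_m -> 'I_n * 'I_n).

Definition vertex_weight (i : 'I_n) : {ffun 'I_n -> int} := [ffun j => (i == j)%:Z].

Definition edge_weight (h : 'I_m) : {ffun 'I_n -> int} :=
  vertex_weight (edge h).2 - vertex_weight (edge h).1.

Definition indeg (a : 'X_{1..m}) (i : 'I_n) : nat := \sum_h a h * ((edge h).2 == i).
Definition outdeg (a : 'X_{1..m}) (i : 'I_n) : nat := \sum_h a h * ((edge h).1 == i).

Lemma mweight_edge a i : mweight edge_weight a i = (indeg a i)%:Z - (outdeg a i)%:Z.
Proof.
rewrite /mweight sum_ffunE /indeg /outdeg !(big_morph Posz PoszD erefl) -sumrB.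
apply: eq_bigr => h _; rewrite ffunMnE !ffunE mulrnBl !PoszM.
by congr (_ - _); rewrite -mulr_natl natz.
Qed.

Lemma mweight_edge_eq a b : mweight edge_weight a = mweight edge_weight b ->
  forall i, (indeg a i + outdeg b i = indeg b i + outdeg a i)%N.
Proof.
move=> ab i; have := congr1 (fun w : {ffun 'I_n -> int} => w i) ab.
by rewrite /= !mweight_edge; lia.
Qed.

Definition cycle_mnm (fwd : bool) (vs : seq 'I_n) (es : seq 'I_m) : 'X_{1..m} :=
  if es is e0 :: _ then
    (\sum_(k < size es | cycle_fwd edge vs es k == fwd) U_(nth e0 es k))%MM
  else 0%MM.

Lemma cycle_mnmE fwd vs es e0 : es != [::] ->
  cycle_mnm fwd vs es =
  (\sum_(k < size es | cycle_fwd edge vs es k == fwd) U_(nth e0 es k))%MM.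
Proof.
case: es => [//|e1 es] _; apply: eq_bigr => k _.
by rewrite (set_nth_default e0 e1).
Qed.

Lemma f_cycleE (K : fieldType) vs es :
  f_cycle K edge vs es = 'X_[cycle_mnm true vs es] - 'X_[cycle_mnm false vs es].
Proof.
case: es => [|e0 es]; first by rewrite /= subrr.
rewrite /f_cycle /cycle_mnm -!mprodXE; congr (_ - _); apply: eq_bigl => k.
  exact/esym/eqb_id.
exact/esym/eqbF_neg.
Qed.

Lemma mdeg_cycle_mnm vs es :
  mdeg (cycle_mnm true vs es + cycle_mnm false vs es) = size es.
Proof.
case: es => [|e0 es]; first by rewrite addm0 mdeg0.
rewrite mdegD !mdeg_sum bigID_eqb.
by under eq_bigr do rewrite mdeg1; rewrite big_const_ord iter_addn_0 mul1n.
Qed.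

Lemma cycle_mnm_balanced vs es : is_cycle edge vs es ->
  mweight edge_weight (cycle_mnm true vs es) = mweight edge_weight (cycle_mnm false vs es).
Proof.
case=> _ size_es _ _ adj; case: vs es size_es adj => [|v0 vs] [|e0 es] // size_es adj.
set q := size (v0 :: vs) in size_es adj *.
pose A k := nth v0 (v0 :: vs) k; pose B k := nth v0 (v0 :: vs) (k.+1 %% q).
pose d k := vertex_weight (B k) - vertex_weight (A k).
have ew k : (k < q)%N -> edge_weight (nth e0 (e0 :: es) k) =
    if cycle_fwd edge (v0 :: vs) (e0 :: es) k then d k else - d k.
  move=> lt_kq; rewrite /cycle_fwd /edge_weight /d /A /B -/q.
  case: (adj k lt_kq v0 e0) => ->; first by rewrite eqxx.
  by case: eqP => [[-> _] | _]; rewrite ?opprB.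
rewrite /cycle_mnm size_es !mweight_sum.
under eq_bigr => k fwd_k do rewrite mweightU ew // (eqP fwd_k).
under [RHS]eq_bigr => k fwd_k do rewrite mweightU ew // (eqP fwd_k).
apply/eqP; rewrite sumrN -addr_eq0 bigID_eqb /d sumrB.
by rewrite (@big_ordS _ _ _ _ (fun j => vertex_weight (A j))) subrr.
Qed.

End Digraph.

Section IncidenceIdeal.
Variables (K : fieldType) (n m : nat) (edge : 'I_m -> 'I_n * 'I_n).
Local Notation eqmodI := (eqmod (IDE_gens edge)).

Definition zv_monomial (al be : 'I_n -> nat) : {mpoly K[m + n + n]} :=
  \prod_i ('X_(zvar m i) ^+ al i * 'X_(vvar m i) ^+ be i).

Lemma zv_monomialM al be ga de :
  zv_monomial al be * zv_monomial ga de =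
  zv_monomial (fun i => al i + ga i)%N (fun i => be i + de i)%N.
Proof. by rewrite -big_split; apply: eq_bigr => i _; rewrite !exprD mulrACA. Qed.

Lemma zv_monomial_diag al : eqmodI (zv_monomial al al) 1.
Proof.
have -> : 1 = \prod_(i < n) (1 : {mpoly K[m + n + n]}) by rewrite big1_eq.
apply: eqmod_prod => i _; rewrite -exprMn -(expr1n _ (al i)); apply: eqmodX.
by apply: ideal_gen_mem; right; exists i.
Qed.

Lemma zv_monomial_eqmod al be ga de : (forall i, be i + ga i = de i + al i)%N ->
  eqmodI (zv_monomial al be) (zv_monomial ga de).
Proof.
(* Multiply by z^ga v^ga and by z^al v^al, both congruent to 1. *)
move=> bal.
have shift : zv_monomial al be * zv_monomial ga ga = zv_monomial ga de * zv_monomial al al.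
  by rewrite !zv_monomialM; apply: eq_bigr => i _; rewrite [(al i + _)%N]addnC bal.
apply: (@eqmod_trans _ _ (zv_monomial al be * zv_monomial ga ga)).
  rewrite -{1}[zv_monomial al be]mulr1.
  exact: eqmodM (eqmod_refl _ _) (eqmod_sym (zv_monomial_diag ga)).
rewrite shift -[X in eqmod _ _ X]mulr1.
exact: eqmodM (eqmod_refl _ _) (zv_monomial_diag al).
Qed.

Lemma embEX_eqmod a :
  eqmodI (embE n ('X_[a] : {mpoly K[m]})) (zv_monomial (outdeg edge a) (indeg edge a)).
Proof.
rewrite /embE mmapX /mmap1 /zv_monomial big_split /= /outdeg /indeg !prodrX_fiber.
rewrite -big_split /=.
apply: eqmod_prod => h _; rewrite -exprMn; apply: eqmodX.
by apply: ideal_gen_mem; left; exists h.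
Qed.

Lemma IED_homog_binomial a b : mweight (edge_weight edge) a = mweight (edge_weight edge) b ->
  IED edge ('X_[a] - 'X_[b] : {mpoly K[m]}).
Proof.
move=> ab; rewrite /IED (_ : embE n _ = embE n 'X_[a] - embE n 'X_[b]); last exact: rmorphB.
apply: (eqmod_trans (embEX_eqmod a)); apply: eqmod_sym; apply: (eqmod_trans (embEX_eqmod b)).
by apply: zv_monomial_eqmod => i; rewrite (mweight_edge_eq ab).
Qed.

Definition var_weight (j : 'I_(m + n + n)) : {ffun 'I_n -> int} :=
  match split j with
  | inl j' => match split j' with
              | inl h => edge_weight edge h
              | inr i => vertex_weight i
              end
  | inr i => - vertex_weight i
  end.

Lemma var_weight_evar h : var_weight (evar n h) = edge_weight edge h.
Proof. by rewrite /var_weight /evar !(unsplitK (inl _)). Qed.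

Lemma var_weight_vvar i : var_weight (vvar m i) = vertex_weight i.
Proof. by rewrite /var_weight /vvar (unsplitK (inl _)) (unsplitK (inr _)). Qed.

Lemma var_weight_zvar i : var_weight (zvar m i) = - vertex_weight i.
Proof. by rewrite /var_weight /zvar (unsplitK (inr _)). Qed.

Lemma IDE_gens_homog (g : {mpoly K[m + n + n]}) :
  IDE_gens edge g -> homog_binomial var_weight g.
Proof.
case=> [[h ->] | [i ->]].
  exists U_(evar n h)%MM, (U_(zvar m (edge h).1) + U_(vvar m (edge h).2))%MM.
  rewrite mpolyXD mweightD !mweightU var_weight_evar var_weight_zvar var_weight_vvar.
  by rewrite addrC.
exists (U_(zvar m i) + U_(vvar m i))%MM, 0%MM.
by rewrite mpolyXD mpolyX0 mweightD !mweightU mweight0 var_weight_zvar var_weight_vvar addNr.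
Qed.

Lemma IED_homogP (f : {mpoly K[m]}) :
  IED edge f <-> ideal_gen (homog_binomial (edge_weight edge)) f.
Proof.
split=> [If | Hf].
  apply: homog_ideal_wcoeff => c.
  rewrite -(@wcoeff_mmap _ _ _ _ _ var_weight (@evar n m)); last exact: var_weight_evar.
  exact: wcoeff_ideal IDE_gens_homog If.
rewrite /IED /embE; apply: ideal_gen_rmorph Hf => _ [a [b [ab ->]]].
exact: IED_homog_binomial.
Qed.

End IncidenceIdeal.

Section ArcCycle.
Variables (n m : nat) (edge : 'I_m -> 'I_n * 'I_n).
Hypothesis loopfree : forall h, (edge h).1 != (edge h).2.
Variables (a b : 'X_{1..m}).
Hypothesis disjoint : forall h, ((0 < a h) && (0 < b h))%N = false.
Hypothesis balanced : mweight (edge_weight edge) a = mweight (edge_weight edge) b.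

Definition arc_src h := if (0 < a h)%N then (edge h).1 else (edge h).2.
Definition arc_dst h := if (0 < a h)%N then (edge h).2 else (edge h).1.

Lemma arc_edge h : edge h = (arc_src h, arc_dst h) \/ edge h = (arc_dst h, arc_src h).
Proof.
by rewrite /arc_src /arc_dst; case: ifP => _; rewrite -surjective_pairing; [left | right].
Qed.

Lemma arc_src_dst h : arc_src h != arc_dst h.
Proof. by rewrite /arc_src /arc_dst; case: ifP => _; rewrite // eq_sym. Qed.

Lemma arc_fwd h : (edge h == (arc_src h, arc_dst h)) = (0 < a h)%N.
Proof.
rewrite /arc_src /arc_dst; case: ifP => _; first by rewrite -surjective_pairing eqxx.
by rewrite {1}[edge h]surjective_pairing xpair_eqE (negbTE (loopfree h)).
Qed.

Lemma arc_in_out u :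
  (\sum_h (a h + b h) * (arc_dst h == u) = \sum_h (a h + b h) * (arc_src h == u))%N.
Proof.
have arcE h (t s : 'I_n) :
    ((a h + b h) * ((if 0 < a h then t else s) == u) = a h * (t == u) + b h * (s == u))%N.
  have := disjoint h; case: (posnP (a h)) => [-> _ | a_pos]; first by rewrite add0n.
  by move=> /negbT; rewrite -eqn0Ngt => /eqP ->; rewrite addn0 mul0n addn0.
rewrite /arc_dst /arc_src; under eq_bigr do rewrite arcE; under [RHS]eq_bigr do rewrite arcE.
by rewrite !big_split /= (mweight_edge_eq balanced u) addnC.
Qed.

Lemma arc_out u : [exists h, (0 < a h + b h)%N && (arc_dst h == u)] ->
  [exists h, (0 < a h + b h)%N && (arc_src h == u)].
Proof.
case/existsP => h /andP [s_h /eqP d_h].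
have : (0 < \sum_h (a h + b h) * (arc_src h == u))%N.
  by rewrite -arc_in_out (bigD1 h) //= d_h eqxx muln1 ltn_addr.
rewrite lt0n sum_nat_eq0 negb_forall => /existsP [h'].
by rewrite muln_eq0 negb_or -lt0n eqb0 negbK => s_h'; apply/existsP; exists h'.
Qed.

Lemma arc_cycle (c : seq 'I_n) (lbl : 'I_n -> 'I_m) :
  c != [::] -> uniq c -> fcycle (arc_dst \o lbl) c ->
  {in c, forall u, (0 < a (lbl u) + b (lbl u))%N && (arc_src (lbl u) == u)} ->
  [/\ is_cycle edge c (map lbl c), (cycle_mnm edge true c (map lbl c) <= a)%MM
     & (cycle_mnm edge false c (map lbl c) <= b)%MM].
Proof.
case: c => [//|u0 c'] _ c_uniq c_cyc c_lbl; set c := u0 :: c' in c_uniq c_cyc c_lbl *.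
have src u : u \in c -> arc_src (lbl u) = u by move/c_lbl/andP => [_ /eqP].
have nxt k : (k < size c)%N -> nth u0 c (k.+1 %% size c) = arc_dst (lbl (nth u0 c k)).
  by move=> lt_k; rewrite (fcycle_nth u0 c_cyc lt_k).
have es_nth k : (k < size c)%N -> nth (lbl u0) (map lbl c) k = lbl (nth u0 c k).
  exact: (nth_map u0).
have fwdE k : (k < size c)%N -> cycle_fwd edge c (map lbl c) k = (0 < a (lbl (nth u0 c k)))%N.
  move=> lt_k; rewrite /cycle_fwd /= -map_cons -/c; change (size c').+1 with (size c).
  by rewrite es_nth // nxt // -arc_fwd src // mem_nth.
have c_size : (1 < size c)%N.
  rewrite ltnNge; apply: contra (arc_src_dst (lbl u0)) => le_c1.
  have c1 : size c = 1 by apply/eqP; rewrite eqn_leq le_c1.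
  by rewrite src ?mem_head //; move: (nxt 0 isT); rewrite c1 modnn /= => /eqP.
have lbl_uniq : uniq (map lbl c).
  by rewrite map_inj_in_uniq // => u v u_c v_c luv; rewrite -(src u) // luv src.
split.
- split; rewrite ?size_map // => k lt_k v0 e0 /=.
  have lt_k1 : (k.+1 %% size c < size c)%N by rewrite ltn_pmod.
  have lt_k' : (k < size (map lbl c))%N by rewrite size_map.
  rewrite !(set_nth_default u0 v0) // (set_nth_default (lbl u0) e0 lt_k').
  by rewrite es_nth // nxt //; have := arc_edge (lbl (nth u0 c k)); rewrite src ?mem_nth.
- rewrite (cycle_mnmE _ _ _ (lbl u0)) //; apply: sum_mnm1_le => // k /eqP.
  have lt_k : (k < size c)%N by rewrite -(size_map lbl) ltn_ord.
  by rewrite fwdE // es_nth.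
- rewrite (cycle_mnmE _ _ _ (lbl u0)) //; apply: sum_mnm1_le => // k /eqP.
  have lt_k : (k < size c)%N by rewrite -(size_map lbl) ltn_ord.
  have /andP [supp_k _] := c_lbl _ (mem_nth u0 lt_k).
  by rewrite fwdE // es_nth // => /negbT a0; move: supp_k; rewrite addn_gt0 (negbTE a0).
Qed.

Lemma exists_cycle_below : a != b ->
  exists vs es, [/\ is_cycle edge vs es, (cycle_mnm edge true vs es <= a)%MM
                   & (cycle_mnm edge false vs es <= b)%MM].
Proof.
move=> neq_ab; have [h0 supp_h0] : exists h, (0 < a h + b h)%N.
  apply/existsP; apply: contraNT neq_ab; rewrite negb_exists => /forallP supp0.
  by apply/eqP/mnmP => h; move: (supp0 h); rewrite -eqn0Ngt addn_eq0 => /andP [/eqP -> /eqP ->].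
pose has_in u := [exists h, (0 < a h + b h)%N && (arc_dst h == u)].
pose lbl u := odflt h0 [pick h | (0 < a h + b h)%N && (arc_src h == u)].
have lblP u : has_in u -> (0 < a (lbl u) + b (lbl u))%N && (arc_src (lbl u) == u).
  by move/arc_out/existsP => [h hP]; rewrite /lbl; case: pickP => [//|/(_ h)]; rewrite hP.
have [|u /lblP /andP [supp_u _]|c [c0 c_uniq c_cyc c_in]] :=
    @fcycle_exists _ (arc_dst \o lbl) has_in (arc_dst h0).
- by apply/existsP; exists h0; rewrite supp_h0 eqxx.
- by apply/existsP; exists (lbl u); rewrite supp_u eqxx.
exists c, (map lbl c); apply: arc_cycle => // u /c_in; exact: lblP.
Qed.

End ArcCycle.

Section CycleIdeal.
Variables (K : fieldType) (n m : nat) (edge : 'I_m -> 'I_n * 'I_n).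
Hypothesis loopfree : forall h, (edge h).1 != (edge h).2.

Lemma cycle_binomial_homog (f : {mpoly K[m]}) :
  cycle_binomials edge f -> homog_binomial (edge_weight edge) f.
Proof.
case=> vs [es [cyc ->]]; rewrite f_cycleE.
by exists (cycle_mnm edge true vs es), (cycle_mnm edge false vs es); rewrite cycle_mnm_balanced.
Qed.

Lemma homog_binomial_cycle_ideal a b :
  mweight (edge_weight edge) a = mweight (edge_weight edge) b ->
  ideal_gen (@cycle_binomials K n m edge) ('X_[a] - 'X_[b]).
Proof.
apply: homog_binomial_ideal => {}a {}b ab neq_ab.
case: (pickP (fun h => (0 < a h) && (0 < b h))%N) => [h /andP [a_h b_h] | disjoint].
  exists U_(h)%MM, U_(h)%MM; rewrite !lep1mP -!lt0n a_h b_h mdegD mdeg1 subrr.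
  by split=> //; apply: ideal_gen0.
have [vs [es [cyc le_a le_b]]] := exists_cycle_below loopfree disjoint ab neq_ab.
exists (cycle_mnm edge true vs es), (cycle_mnm edge false vs es); split=> //.
- exact: cycle_mnm_balanced.
- by rewrite mdeg_cycle_mnm; case: cyc => le2 -> _ _ _; apply: leq_trans le2.
- by rewrite -f_cycleE; apply: ideal_gen_mem; exists vs, es.
Qed.

Lemma cycle_homogP (f : {mpoly K[m]}) :
  ideal_gen (@cycle_binomials K n m edge) f <-> ideal_gen (homog_binomial (edge_weight edge)) f.
Proof.
split; apply: ideal_gen_trans => g.
  by move/cycle_binomial_homog; apply: ideal_gen_mem.
by case=> a [b [ab ->]]; apply: homog_binomial_cycle_ideal.
Qed.

End CycleIdeal.

Theorem theorem6 (K : fieldType) (n m : nat) (edge : 'I_m -> 'I_n * 'I_n) :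
  [pchar K] =i pred0 ->
  simple_digraph edge ->
  forall f : {mpoly K[m]},
    IED edge f <-> ideal_gen (@cycle_binomials K n m edge) f.
Proof.
move=> _ [_ loopfree] f.
exact: iff_trans (IED_homogP edge f) (iff_sym (cycle_homogP loopfree f)).
Qed.
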